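(* Let $(\Sigma,E)$ be an algebraic theory with free monad $(T,\eta,\mu)$. For every $T$-semialgebra $\alpha:TX\to X$, the $\Sigma^{\mathrm{s}}$-algebra $G(X,\alpha)=(X,I)$ with $I(\mathsf{a})=\alpha\circ\eta_X$ and $I(\mathsf{op})=\alpha\circ\mathsf{op}^{TX}\circ(\eta_X)^n$ for $(\mathsf{op}:n)\in\Sigma$ is a $(\Sigma^{\mathrm{s}},E^{\mathrm{s}})$-algebra, i.e. it satisfies all equations of $E^{\mathrm{s}}$.
   Context: $T=T_{\Sigma,E}$: $TX$ is the set of $\Sigma$-terms over $X$ modulo the smallest congruence containing substitution instances of $E$, with $\mathsf{op}^{TX}(\overline{t_1},\dots,\overline{t_n})=\overline{\mathsf{op}(t_1,\dots,t_n)}$, $\eta_X(x)=\overline{x}$ and $\mu_X$ flattening terms. A $T$-semialgebra is $\alpha:TX\to X$ with $\alpha\circ\mu_X=\alpha\circ T\alpha$. The theory $(\Sigma^{\mathrm{s}},E^{\mathrm{s}})$: $\Sigma^{\mathrm{s}}=\Sigma\uplus\{\mathsf{a}:1\}$ and $E^{\mathrm{s}}$ consists of $\mathsf{a}\mathsf{a}v_1=\mathsf{a}v_1$; $\mathsf{a}(\mathsf{op}(v_1,\dots,v_n))=\mathsf{op}(v_1,\dots,v_n)$ and $\mathsf{op}(\mathsf{a}v_1,\dots,\mathsf{a}v_n)=\mathsf{op}(v_1,\dots,v_n)$ for every $(\mathsf{op}:n)\in\Sigma$; and $t(\mathsf{a}v_1,\dots,\mathsf{a}v_n)=s(\mathsf{a}v_1,\dots,\mathsf{a}v_n)$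 for every equation $t(v_1,\dots,v_n)=s(v_1,\dots,v_n)$ in $E$. *)

From mathcomp Require Import all_boot.
From Stdlib Require Import ClassicalEpsilon.

Set Implicit Arguments.
Unset Strict Implicit.
Unset Printing Implicit Defensive.

Record signature := Signature { sop : Type; sar : sop -> nat }.

Inductive term (S : signature) (X : Type) : Type :=
| Var : X -> term S X
| App : forall o : sop S, ('I_(sar o) -> term S X) -> term S X.
Arguments Var {S X} _.
Arguments App {S X} _ _.

Fixpoint bind (S : signature) (X Y : Type) (s : X -> term S Y) (t : term S X)
  : term S Y :=
  match t with
  | Var x => s x
  | App o ts => App o (fun i => bind s (ts i))
  end.

Definition fmap (S : signature) (X Y : Type) (f : X -> Y) (t : term S X)
  : term S Y := bind (fun x => Var (f x)) t.

Definition equations (S : signature) := term S nat -> term S nat -> Prop.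

Inductive conv (S : signature) (E : equations S) (X : Type)
  : term S X -> term S X -> Prop :=
| conv_refl t : conv E t t
| conv_sym t u : conv E t u -> conv E u t
| conv_trans t u w : conv E t u -> conv E u w -> conv E t w
| conv_inst l r (sb : nat -> term S X) : E l r -> conv E (bind sb l) (bind sb r)
| conv_cong o (ts us : 'I_(sar o) -> term S X) :
    (forall i, conv E (ts i) (us i)) -> conv E (App o ts) (App o us).

(** T X: terms modulo the congruence, as the type of equivalence classes. *)
Definition cls (S : signature) (E : equations S) (X : Type) (t : term S X)
  : term S X -> Prop := fun u => conv E t u.

Definition T (S : signature) (E : equations S) (X : Type) : Type :=
  {A : term S X -> Prop | exists t, A = cls E t}.

Definition tclass (S : signature) (E : equations S) (X : Type) (t : term S X)
  : T E X := exist _ (cls E t) (ex_intro _ t erefl).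

Definition repr (S : signature) (E : equations S) (X : Type) (c : T E X)
  : term S X :=
  proj1_sig (constructive_indefinite_description _ (proj2_sig c)).

Definition eta (S : signature) (E : equations S) (X : Type) (x : X) : T E X :=
  tclass E (Var x).

Definition opT (S : signature) (E : equations S) (X : Type) (o : sop S)
  (cs : 'I_(sar o) -> T E X) : T E X :=
  tclass E (App o (fun i => repr (cs i))).

Definition mu (S : signature) (E : equations S) (X : Type) (c : T E (T E X))
  : T E X :=
  tclass E (bind (fun a => repr a) (repr c)).

Definition Tmap (S : signature) (E : equations S) (X Y : Type) (f : X -> Y)
  (c : T E X) : T E Y :=
  tclass E (fmap f (repr c)).

Definition semialgebra (S : signature) (E : equations S) (X : Type)
  (alpha : T E X -> X) : Prop :=
  forall c : T E (T E X), alpha (mu c) = alpha (Tmap alpha c).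

Definition interp (S : signature) (X : Type) : Type :=
  forall o : sop S, ('I_(sar o) -> X) -> X.

Fixpoint eval (S : signature) (X V : Type) (I : interp S X) (v : V -> X)
  (t : term S V) : X :=
  match t with
  | Var x => v x
  | App o ts => I o (fun i => eval I v (ts i))
  end.

Definition satisfies (S : signature) (X : Type) (I : interp S X)
  (l r : term S nat) : Prop :=
  forall v : nat -> X, eval I v l = eval I v r.

(** The extended signature Sigma^s = Sigma + {a : 1}; [None] is [a]. *)
Definition sig_s (S : signature) : signature :=
  @Signature (option (sop S))
    (fun o => match o with None => 1 | Some o' => sar o' end).

Definition sA {S : signature} {V : Type} (t : term (sig_s S) V)
  : term (sig_s S) V :=
  @App (sig_s S) V None (fun _ => t).

Definition sOp {S : signature} {V : Type} (o : sop S)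
  (ts : 'I_(sar o) -> term (sig_s S) V) : term (sig_s S) V :=
  @App (sig_s S) V (Some o) ts.

Arguments sOp {S V} o ts.

Fixpoint embed (S : signature) (V : Type) (t : term S V) : term (sig_s S) V :=
  match t with
  | Var x => Var x
  | App o ts => sOp o (fun i => embed (ts i))
  end.

(** The equations E^s (variables v_1, v_2, ... are Var 0, Var 1, ...). *)
Inductive Es (S : signature) (E : equations S)
  : term (sig_s S) nat -> term (sig_s S) nat -> Prop :=
| Es_idem : Es E (sA (sA (Var 0))) (sA (Var 0))
| Es_out (o : sop S) :
    Es E (sA (sOp o (fun i => Var (nat_of_ord i)))) (sOp o (fun i => Var (nat_of_ord i)))
| Es_in (o : sop S) :
    Es E (sOp o (fun i => sA (Var (nat_of_ord i)))) (sOp o (fun i => Var (nat_of_ord i)))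
| Es_eq (t s : term S nat) : E t s ->
    Es E (bind (fun v => sA (Var v)) (embed t)) (bind (fun v => sA (Var v)) (embed s)).

Definition G (S : signature) (E : equations S) (X : Type) (alpha : T E X -> X)
  : interp (sig_s S) X :=
  fun o => match o as o0 return ('I_(@sar (sig_s S) o0) -> X) -> X with
           | None => fun xs => alpha (eta E (xs ord0))
           | Some o' => fun xs => alpha (@opT S E X o' (fun i => eta E (xs i)))
           end.

(* The semialgebra law [alpha \o mu = alpha \o T alpha], applied to the class
   of a variable [c] and of [op(c_1, ..., c_n)] with [c], [c_i] in [TX], gives
   [alpha (eta (alpha c)) = alpha c] and
   [alpha (op (c_i)_i) = alpha (op (eta (alpha c_i))_i)].  The first gives
   [a a v = a v] and [a op(v) = op(v)]; the second gives
   [op(a v_1, ..., a v_n) = op(v_1, ..., v_n)] and, by induction on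
   Sigma-terms, that evaluating an embedded term at values [alpha c_i] is
   [alpha] of the substituted class.  Hence the instances [t(a v) = s(a v)]
   of [E] hold, since they are already identified in [TX]. *)
From Pilot Require Import Defs.
From Stdlib Require Import FunctionalExtensionality PropExtensionality.
From Stdlib Require Import ProofIrrelevance ClassicalEpsilon.
From mathcomp Require Import all_boot.

Set Implicit Arguments.
Unset Strict Implicit.
Unset Printing Implicit Defensive.

Section TermClasses.

Variables (S : signature) (E : equations S).

Lemma eq_tclass (X : Type) (t u : term S X) :
  conv E t u -> tclass E t = tclass E u.
Proof.
move=> tu; have cls_tu : cls E t = cls E u.
  apply: functional_extensionality => w; apply: propositional_extensionality.
  split=> [tw | uw]; first exact: conv_trans (conv_sym tu) tw.
  exact: conv_trans tu uw.
rewrite /tclass; move: (ex_intro _ t _) (ex_intro _ u _); rewrite cls_tu => p q.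
by rewrite (proof_irrelevance _ p q).
Qed.

Lemma tclass_conv (X : Type) (t u : term S X) :
  tclass E t = tclass E u -> conv E t u.
Proof.
move=> /(f_equal (@proj1_sig _ _)) /= cls_tu.
have : cls E u u by apply: conv_refl.
by rewrite -cls_tu.
Qed.

Lemma reprK (X : Type) (c : T E X) : tclass E (Defs.repr c) = c.
Proof.
rewrite /Defs.repr; case: (constructive_indefinite_description _ _) => t /= ct.
case: c ct => A pA /= ct; subst A; rewrite /tclass.
by rewrite (proof_irrelevance _ (ex_intro _ t erefl) pA).
Qed.

Lemma conv_repr_tclass (X : Type) (t : term S X) :
  conv E (Defs.repr (tclass E t)) t.
Proof. by apply: tclass_conv; rewrite reprK. Qed.

Lemma bind_bind (X Y Z : Type) (s : Y -> term S Z) (s' : X -> term S Y)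
    (t : term S X) :
  bind s (bind s' t) = bind (fun x => bind s (s' x)) t.
Proof.
elim: t => [x | o ts IH] //=.
by congr App; apply: functional_extensionality => i; exact: IH.
Qed.

Lemma conv_bind (X Y : Type) (s : X -> term S Y) (t u : term S X) :
  conv E t u -> conv E (bind s t) (bind s u).
Proof.
elim=> {t u} [t | t u _ | t u w _ tu _ uw | l r s' El | o ts us _ IH] /=.
- exact: conv_refl.
- exact: conv_sym.
- exact: conv_trans tu uw.
- by rewrite !bind_bind; apply: conv_inst.
- by apply: conv_cong => i; exact: IH.
Qed.

Lemma tclass_bind_repr (X Y : Type) (s : X -> term S Y) (t : term S X) :
  tclass E (bind s (Defs.repr (tclass E t))) = tclass E (bind s t).
Proof. exact/eq_tclass/conv_bind/conv_repr_tclass. Qed.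

Lemma opT_tclass (X : Type) (o : sop S) (ts : 'I_(sar o) -> term S X) :
  opT (fun i => tclass E (ts i)) = tclass E (App o ts).
Proof. by apply/eq_tclass/conv_cong => i; exact: conv_repr_tclass. Qed.

End TermClasses.

Lemma eval_bind (S : signature) (X V W : Type) (I : interp S X) (v : W -> X)
    (s : V -> term S W) (t : term S V) :
  eval I v (bind s t) = eval I (fun x => eval I v (s x)) t.
Proof.
elim: t => [x | o ts IH] //=.
by congr (I o); apply: functional_extensionality => i; exact: IH.
Qed.

Section Semialgebra.

Variables (S : signature) (E : equations S) (X : Type) (alpha : T E X -> X).
Hypothesis alpha_semialg : semialgebra alpha.

Lemma semialgebra_tclass (t : term S (T E X)) :
  alpha (tclass E (bind (@Defs.repr S E X) t))
  = alpha (tclass E (fmap alpha t)).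
Proof.
by have := alpha_semialg (tclass E t); rewrite /mu /Tmap !tclass_bind_repr.
Qed.

Lemma semialgebra_eta (c : T E X) : alpha (eta E (alpha c)) = alpha c.
Proof. by have := semialgebra_tclass (Var c); rewrite /= reprK. Qed.

Lemma semialgebra_opT (o : sop S) (cs : 'I_(sar o) -> T E X) :
  alpha (opT (fun i => eta E (alpha (cs i)))) = alpha (opT cs).
Proof.
by have := semialgebra_tclass (App o (fun i => Var (cs i))); rewrite opT_tclass.
Qed.

Lemma eval_G_embed (V : Type) (cs : V -> T E X) (t : term S V) :
  eval (G alpha) (fun x => alpha (cs x)) (embed t)
  = alpha (tclass E (bind (fun x => Defs.repr (cs x)) t)).
Proof.
elim: t => [x | o ts IH] /=; first by rewrite reprK.
transitivity (alpha (opT (fun i => eta E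
                (alpha (tclass E (bind (fun x => Defs.repr (cs x)) (ts i))))))).
  congr (alpha (opT (o := o) _)).
  by apply: functional_extensionality => i; rewrite IH.
by rewrite semialgebra_opT opT_tclass.
Qed.

End Semialgebra.

Theorem lemma10 (S : signature) (E : equations S) (X : Type)
  (alpha : T E X -> X) :
  semialgebra alpha ->
  forall l r : term (sig_s S) nat, Es E l r -> satisfies (G alpha) l r.
Proof.
move=> alpha_semialg l r [| o | o | t s Ets] v /=.
- exact: semialgebra_eta.
- exact: semialgebra_eta.
- exact: semialgebra_opT.
- rewrite !eval_bind /= !(eval_G_embed alpha_semialg (fun x => eta E (v x))).
  by congr alpha; apply/eq_tclass/conv_inst.
Qed.
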